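(* Let $\mathcal{A}$ be a fuzzy automaton and $\Phi=(\varphi_n)_{n\in\mathbb{N}}$ the greatest depth-bounded fuzzy simulation between $\mathcal{A}$ and itself. If $\mathcal{L}$ satisfies the join-meet distributivity law, $\otimes$ is continuous and $\mathcal{A}$ is image-finite, then (a) $\bigwedge_n\varphi_n$ is the greatest fuzzy simulation between $\mathcal{A}$ and itself; (b) each $\varphi_n$ is a fuzzy preorder on $A$; (c) $\|\Phi\|_{\mathcal{A},\mathcal{A}}=1$.
   Context: $\mathcal{L}=\langle L,\le,\otimes,\Rightarrow,0,1\rangle$ is a complete residuated lattice: $\langle L,\le,0,1\rangle$ is a complete lattice with least element $0$ and greatest element $1$, $\langle L,\otimes,1\rangle$ is a commutative monoid, and $x\otimes y\le z$ iff $x\le (y\Rightarrow z)$. Join-meet distributivity law: $a\vee\bigwedge B=\bigwedge_{b\in B}(a\vee b)$. $\otimes$ continuous: $x\otimes\bigwedge Y=\bigwedge_{y\in Y}(x\otimes y)$. Fuzzy relations are maps into $L$ ordered pointwise; $\varphi^{-1}(b,a)=\varphi(a,b)$; $(\varphi\circ\psi)(a,c)=\bigvee_b\varphi(a,b)\otimes\psi(b,c)$, $(f\circ\varphi)(b)=\bigvee_a f(a)\otimes\varphi(a,b)$, $(\varphi\circ g)(a)=\bigvee_b\varphi(a,b)\otimes g(b)$; $S(g,f)=\bigwedge_a(g(a)\Rightarrow f(a))$. A fuzzy relation $\varphi$ on $A$ is a fuzzy preorder if $\varphi(a,a)=1$ for all $a$ and $\varphi\circ\varphi\le\varphi$. A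 fuzzy automaton over $\Sigma$ is $\mathcal{A}=\langle A,\delta^{\mathcal{A}},\sigma^{\mathcal{A}},\tau^{\mathcal{A}}\rangle$ with $A$ nonempty, $\delta^{\mathcal{A}}:A\times\Sigma\times A\to L$, $\sigma^{\mathcal{A}},\tau^{\mathcal{A}}:A\to L$; $\delta^{\mathcal{A}}_s(x,y)=\delta^{\mathcal{A}}(x,s,y)$. It is image-finite if each $\{y\mid\delta^{\mathcal{A}}_s(x,y)>0\}$ is finite and $\sigma^{\mathcal{A}}$ has finite support. $\|\varphi\|_{\mathcal{A},\mathcal{A}}=S(\sigma^{\mathcal{A}},\sigma^{\mathcal{A}}\circ\varphi^{-1})$. A fuzzy simulation between $\mathcal{A}$ and $\mathcal{A}'$ is $\varphi$ with $\varphi^{-1}\circ\tau^{\mathcal{A}}\le\tau^{\mathcal{A}'}$ and $\varphi^{-1}\circ\delta^{\mathcal{A}}_s\le\delta^{\mathcal{A}'}_s\circ\varphi^{-1}$ for all $s$. A depth-bounded fuzzy simulation between $\mathcal{A}$ and $\mathcal{A}'$ is a sequence $(\varphi_n)_{n\in\mathbb{N}}$ with $\varphi_n\le\varphi_{n-1}$ ($n\ge1$), $\varphi_0^{-1}\circ\tau^{\mathcal{A}}\le\tau^{\mathcal{A}'}$, $\varphi_n^{-1}\circ\delta^{\mathcal{A}}_s\le\delta^{\mathcal{A}'}_s\circ\varphi_{n-1}^{-1}$ ($s\in\Sigma,n\ge1$); its norm is $\bigwedge_n\|\varphi_n\|$. Sequences are ordered componentwise. *)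

From Stdlib Require Import List.

(** Complete residuated lattice  <L, <=, (x), =>, 0, 1>.
    Subsets of L are predicates [L -> Prop]; [sup]/[inf] are arbitrary joins/meets. *)
Record CRL := {
  car :> Type;
  le : car -> car -> Prop;
  le_refl : forall x, le x x;
  le_trans : forall x y z, le x y -> le y z -> le x z;
  le_antisym : forall x y, le x y -> le y x -> x = y;
  sup : (car -> Prop) -> car;
  sup_ub : forall (S : car -> Prop) x, S x -> le x (sup S);
  sup_least : forall (S : car -> Prop) y, (forall x, S x -> le x y) -> le (sup S) y;
  inf : (car -> Prop) -> car;
  inf_lb : forall (S : car -> Prop) x, S x -> le (inf S) x;
  inf_greatest : forall (S : car -> Prop) y, (forall x, S x -> le y x) -> le y (inf S);
  zero : car;
  one : car;
  zero_least : forall x, le zero x;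
  one_greatest : forall x, le x one;
  mul : car -> car -> car;
  mul_assoc : forall x y z, mul x (mul y z) = mul (mul x y) z;
  mul_comm : forall x y, mul x y = mul y x;
  mul_one : forall x, mul x one = x;
  res : car -> car -> car;
  adjunction : forall x y z, le (mul x y) z <-> le x (res y z)
}.

Arguments le {L} : rename.
Arguments sup {L} : rename.
Arguments inf {L} : rename.
Arguments zero {L} : rename.
Arguments one {L} : rename.
Arguments mul {L} : rename.
Arguments res {L} : rename.

Section FuzzyDefs.
Variable L : CRL.

Definition join (a b : L) : L := sup (fun x => x = a \/ x = b).
Definition bigsup {I : Type} (f : I -> L) : L := sup (fun x => exists i, x = f i).
Definition biginf {I : Type} (f : I -> L) : L := inf (fun x => exists i, x = f i).

Definition join_meet_distributive : Prop :=
  forall (a : L) (B : L -> Prop),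
    join a (inf B) = inf (fun x => exists b, B b /\ x = join a b).

Definition mul_continuous : Prop :=
  forall (x : L) (Y : L -> Prop), (exists y, Y y) ->
    mul x (inf Y) = inf (fun z => exists y, Y y /\ z = mul x y).

Definition frel (A B : Type) := A -> B -> L.
Definition fset (A : Type) := A -> L.

Definition rel_le {A B : Type} (phi psi : frel A B) : Prop :=
  forall a b, le (phi a b) (psi a b).
Definition set_le {A : Type} (f g : fset A) : Prop := forall a, le (f a) (g a).

Definition inv {A B : Type} (phi : frel A B) : frel B A := fun b a => phi a b.

Definition rcomp {A B C : Type} (phi : frel A B) (psi : frel B C) : frel A C :=
  fun a c => bigsup (fun b : B => mul (phi a b) (psi b c)).
Definition scomp {A B : Type} (f : fset A) (phi : frel A B) : fset B :=
  fun b => bigsup (fun a : A => mul (f a) (phi a b)).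
Definition compv {A B : Type} (phi : frel A B) (g : fset B) : fset A :=
  fun a => bigsup (fun b : B => mul (phi a b) (g b)).
Definition subsethood {A : Type} (g f : fset A) : L :=
  biginf (fun a : A => res (g a) (f a)).

Definition fuzzy_preorder {A : Type} (phi : frel A A) : Prop :=
  (forall a, phi a a = one) /\ rel_le (rcomp phi phi) phi.

Record fautomaton (Sigma : Type) := {
  st : Type;
  st_nonempty : inhabited st;
  delta : st -> Sigma -> st -> L;
  sigma : fset st;
  tau : fset st
}.

Arguments st {Sigma}.
Arguments delta {Sigma}.
Arguments sigma {Sigma}.
Arguments tau {Sigma}.

Definition deltas {Sigma} (M : fautomaton Sigma) (s : Sigma) : frel (st M) (st M) :=
  fun x y => delta M x s y.

Definition image_finite {Sigma} (M : fautomaton Sigma) : Prop :=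
  (forall (x : st M) (s : Sigma), exists l : list (st M),
      forall y, delta M x s y <> zero -> In y l) /\
  (exists l : list (st M), forall x, sigma M x <> zero -> In x l).

Definition rel_norm {Sigma} (M M' : fautomaton Sigma) (phi : frel (st M) (st M')) : L :=
  subsethood (sigma M) (scomp (sigma M') (inv phi)).

Definition fuzzy_simulation {Sigma} (M M' : fautomaton Sigma)
    (phi : frel (st M) (st M')) : Prop :=
  set_le (compv (inv phi) (tau M)) (tau M') /\
  forall s, rel_le (rcomp (inv phi) (deltas M s)) (rcomp (deltas M' s) (inv phi)).

Definition greatest_fuzzy_simulation {Sigma} (M M' : fautomaton Sigma)
    (phi : frel (st M) (st M')) : Prop :=
  fuzzy_simulation M M' phi /\
  forall psi, fuzzy_simulation M M' psi -> rel_le psi phi.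

Definition db_fuzzy_simulation {Sigma} (M M' : fautomaton Sigma)
    (Phi : nat -> frel (st M) (st M')) : Prop :=
  (forall n, rel_le (Phi (S n)) (Phi n)) /\
  set_le (compv (inv (Phi 0)) (tau M)) (tau M') /\
  (forall s n, rel_le (rcomp (inv (Phi (S n))) (deltas M s))
                      (rcomp (deltas M' s) (inv (Phi n)))).

Definition greatest_db_fuzzy_simulation {Sigma} (M M' : fautomaton Sigma)
    (Phi : nat -> frel (st M) (st M')) : Prop :=
  db_fuzzy_simulation M M' Phi /\
  forall Psi, db_fuzzy_simulation M M' Psi -> forall n, rel_le (Psi n) (Phi n).

Definition db_norm {Sigma} (M M' : fautomaton Sigma)
    (Phi : nat -> frel (st M) (st M')) : L :=
  biginf (fun n : nat => rel_norm M M' (Phi n)).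

Definition rel_biginf {A B : Type} (Phi : nat -> frel A B) : frel A B :=
  fun a b => biginf (fun n : nat => Phi n a b).

End FuzzyDefs.

Arguments st {L Sigma}.
Arguments delta {L Sigma}.
Arguments sigma {L Sigma}.
Arguments tau {L Sigma}.

(** The proof has three independent parts.
    (a) Every fuzzy simulation psi gives the constant depth-bounded simulation
        (psi, psi, ...), hence psi <= phi_n for all n, so psi <= /\_n phi_n.
        Conversely /\_n phi_n is itself a simulation: the delicate inequality
        /\_n (delta_s o phi_n^-1) <= delta_s o (/\_n phi_n)^-1 holds because,
        by image-finiteness, each join defining delta_s o phi_n^-1 is a finite
        join, and meets of decreasing chains commute with finite joins
        (join-meet distributivity) and with (x) (continuity of (x)).
    (b) The identity relation is a simulation, so Id <= phi_n (reflexivity);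
        depth-bounded simulations compose, so (phi_n o phi_n)_n is one and
        phi_n o phi_n <= phi_n (transitivity).
    (c) A reflexive relation phi always has norm S(sigma, sigma o phi^-1) = 1.
    The file first develops the calculus of fuzzy relations over a complete
    residuated lattice, then the facts about (depth-bounded) simulations, and
    finally assembles the theorem. *)
From Stdlib Require Import List Classical FunctionalExtensionality Lia.

Section Calculus.
Variable L : CRL.

Lemma bigsup_ub {I} (f : I -> L) (x : L) (i : I) : le x (f i) -> le x (bigsup L f).
Proof. intros H. eapply le_trans; [exact H|]. apply sup_ub. exists i; reflexivity. Qed.

Lemma bigsup_least {I} (f : I -> L) (y : L) :
  (forall i, le (f i) y) -> le (bigsup L f) y.
Proof. intros H. apply sup_least. intros x [i ->]. apply H. Qed.

Lemma biginf_lb {I} (f : I -> L) (x : L) (i : I) : le (f i) x -> le (biginf L f) x.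
Proof. intros H. eapply le_trans; [|exact H]. apply inf_lb. exists i; reflexivity. Qed.

Lemma biginf_greatest {I} (f : I -> L) (y : L) :
  (forall i, le y (f i)) -> le y (biginf L f).
Proof. intros H. apply inf_greatest. intros x [i ->]. apply H. Qed.

Lemma bigsup_mono {I} (f g : I -> L) :
  (forall i, le (f i) (g i)) -> le (bigsup L f) (bigsup L g).
Proof. intros H. apply bigsup_least. intro i. apply (bigsup_ub _ _ i), H. Qed.

Lemma biginf_mono {I} (f g : I -> L) :
  (forall i, le (f i) (g i)) -> le (biginf L f) (biginf L g).
Proof. intros H. apply biginf_greatest. intro i. apply (biginf_lb _ _ i), H. Qed.

Lemma mul_mono_l (a b c : L) : le a b -> le (mul a c) (mul b c).
Proof.
  intros H. apply adjunction. eapply le_trans; [exact H|].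
  apply adjunction, le_refl.
Qed.

Lemma mul_mono (a a' b b' : L) : le a a' -> le b b' -> le (mul a b) (mul a' b').
Proof.
  intros Ha Hb. eapply le_trans; [apply mul_mono_l, Ha|].
  rewrite !(mul_comm L a'). apply mul_mono_l, Hb.
Qed.

Lemma mul_bigsup_l {I} (f : I -> L) (c : L) :
  le (mul (bigsup L f) c) (bigsup L (fun i => mul (f i) c)).
Proof.
  apply adjunction. apply bigsup_least. intro i. apply adjunction.
  apply (bigsup_ub (fun i => mul (f i) c) _ i), le_refl.
Qed.

Lemma mul_bigsup_r {I} (f : I -> L) (c : L) :
  le (mul c (bigsup L f)) (bigsup L (fun i => mul c (f i))).
Proof.
  rewrite mul_comm. eapply le_trans; [apply mul_bigsup_l|].
  apply bigsup_mono. intro i. rewrite mul_comm. apply le_refl.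
Qed.

Lemma rcomp_mono {A B C} (p p' : frel L A B) (q q' : frel L B C) :
  rel_le L p p' -> rel_le L q q' -> rel_le L (rcomp L p q) (rcomp L p' q').
Proof. intros Hp Hq a c. apply bigsup_mono. intro b. apply mul_mono; auto. Qed.

Lemma compv_mono {A B} (p p' : frel L A B) (g g' : fset L B) :
  rel_le L p p' -> set_le L g g' -> set_le L (compv L p g) (compv L p' g').
Proof. intros Hp Hg a. apply bigsup_mono. intro b. apply mul_mono; auto. Qed.

Lemma rcomp_assoc {A B C D} (p : frel L A B) (q : frel L B C) (r : frel L C D) :
  rcomp L (rcomp L p q) r = rcomp L p (rcomp L q r).
Proof.
  extensionality a. extensionality d. apply le_antisym.
  - apply bigsup_least. intro c. eapply le_trans; [apply mul_bigsup_l|].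
    apply bigsup_least. intro b. apply (bigsup_ub _ _ b).
    rewrite <- mul_assoc. apply mul_mono; [apply le_refl|].
    apply (bigsup_ub (fun c => mul (q b c) (r c d)) _ c), le_refl.
  - apply bigsup_least. intro b. eapply le_trans; [apply mul_bigsup_r|].
    apply bigsup_least. intro c. apply (bigsup_ub _ _ c).
    rewrite mul_assoc. apply mul_mono_l.
    apply (bigsup_ub (fun b => mul (p a b) (q b c)) _ b), le_refl.
Qed.

Lemma compv_rcomp {A B C} (p : frel L A B) (q : frel L B C) (g : fset L C) :
  set_le L (compv L (rcomp L p q) g) (compv L p (compv L q g)).
Proof.
  intro a. apply bigsup_least. intro c. eapply le_trans; [apply mul_bigsup_l|].
  apply bigsup_least. intro b. apply (bigsup_ub _ _ b).
  rewrite <- mul_assoc. apply mul_mono; [apply le_refl|].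
  apply (bigsup_ub (fun c => mul (q b c) (g c)) _ c), le_refl.
Qed.

Lemma inv_rcomp {A B C} (p : frel L A B) (q : frel L B C) :
  inv L (rcomp L p q) = rcomp L (inv L q) (inv L p).
Proof.
  extensionality c. extensionality a.
  apply le_antisym; apply bigsup_mono; intro b; rewrite mul_comm; apply le_refl.
Qed.

Definition id_rel {A} : frel L A A := fun a b => sup (fun x : L => x = one /\ a = b).

Lemma id_rel_diag {A} (a : A) : id_rel a a = one.
Proof. apply le_antisym; [apply one_greatest|]. apply sup_ub. split; reflexivity. Qed.

Lemma id_rel_mul_le {A} (a b : A) (t z : L) :
  (a = b -> le t z) -> le (mul (id_rel a b) t) z.
Proof.
  intros H. apply adjunction. apply sup_least. intros x [-> e].
  apply adjunction. rewrite mul_comm, mul_one. apply H, e.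
Qed.

Lemma id_rel_mul_ge {A} (a : A) (t : L) : le t (mul (id_rel a a) t).
Proof. rewrite id_rel_diag, mul_comm, mul_one. apply le_refl. Qed.

Lemma rcomp_id_l {A B} (p : frel L A B) : rcomp L id_rel p = p.
Proof.
  extensionality a. extensionality c. apply le_antisym.
  - apply bigsup_least. intro b. apply id_rel_mul_le. intros ->. apply le_refl.
  - apply (bigsup_ub _ _ a), id_rel_mul_ge.
Qed.

Lemma rcomp_id_r {A B} (p : frel L A B) : rcomp L p id_rel = p.
Proof.
  extensionality a. extensionality c. apply le_antisym.
  - apply bigsup_least. intro b. rewrite mul_comm.
    apply id_rel_mul_le. intros ->. apply le_refl.
  - apply (bigsup_ub _ _ c). rewrite mul_comm. apply id_rel_mul_ge.
Qed.

Lemma compv_id {A} (g : fset L A) : compv L id_rel g = g.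
Proof.
  extensionality a. apply le_antisym.
  - apply bigsup_least. intro b. apply id_rel_mul_le. intros ->. apply le_refl.
  - apply (bigsup_ub _ _ a), id_rel_mul_ge.
Qed.

Lemma inv_id {A} : inv L (@id_rel A) = id_rel.
Proof.
  extensionality a. extensionality b. apply le_antisym;
    apply sup_least; intros x [-> e]; apply sup_ub; split; auto.
Qed.

Lemma join_ub_l (a b : L) : le a (join L a b).
Proof. apply sup_ub. left; reflexivity. Qed.

Lemma join_ub_r (a b : L) : le b (join L a b).
Proof. apply sup_ub. right; reflexivity. Qed.

Lemma join_least (a b z : L) : le a z -> le b z -> le (join L a b) z.
Proof. intros Ha Hb. apply sup_least. intros x [-> | ->]; auto. Qed.

Lemma join_mono (a a' b b' : L) : le a a' -> le b b' -> le (join L a b) (join L a' b').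
Proof.
  intros Ha Hb. apply join_least.
  - eapply le_trans; [exact Ha | apply join_ub_l].
  - eapply le_trans; [exact Hb | apply join_ub_r].
Qed.

Lemma join_comm (a b : L) : join L a b = join L b a.
Proof. apply le_antisym; apply join_least; (apply join_ub_l || apply join_ub_r). Qed.

Lemma decreasing_le (a : nat -> L) :
  (forall n, le (a (S n)) (a n)) -> forall n k, n <= k -> le (a k) (a n).
Proof.
  intros Ha n k Hk. induction Hk; [apply le_refl|].
  eapply le_trans; [apply Ha | exact IHHk].
Qed.

(** Under join-meet distributivity, the meet of the joins of two decreasing
    sequences is the join of their meets: apply the law twice and compare
    [a n \/ b m] with [a (max n m) \/ b (max n m)]. *)
Lemma biginf_join_decreasing (a b : nat -> L) :
  join_meet_distributive L ->
  (forall n, le (a (S n)) (a n)) -> (forall n, le (b (S n)) (b n)) ->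
  le (biginf L (fun n => join L (a n) (b n))) (join L (biginf L a) (biginf L b)).
Proof.
  intros Hdistr Ha Hb. unfold biginf at 3. rewrite Hdistr.
  apply inf_greatest. intros x [y [[m ->] ->]].
  rewrite join_comm. unfold biginf at 2. rewrite Hdistr.
  apply inf_greatest. intros x [y [[n ->] ->]].
  apply (biginf_lb _ _ (max n m)). rewrite join_comm.
  apply join_mono; apply decreasing_le; auto; lia.
Qed.

Fixpoint list_join {X} (h : X -> L) (l : list X) : L :=
  match l with nil => zero | x :: l' => join L (h x) (list_join h l') end.

Lemma list_join_mono {X} (h h' : X -> L) (l : list X) :
  (forall x, le (h x) (h' x)) -> le (list_join h l) (list_join h' l).
Proof. intros H. induction l; simpl; [apply le_refl | apply join_mono; auto]. Qed.

Lemma list_join_ub {X} (h : X -> L) (l : list X) (x : X) :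
  In x l -> le (h x) (list_join h l).
Proof.
  induction l as [|y l IH]; simpl; [tauto|]. intros [-> | Hx].
  - apply join_ub_l.
  - eapply le_trans; [apply IH, Hx | apply join_ub_r].
Qed.

Lemma list_join_le_bigsup {X} (h : X -> L) (l : list X) :
  le (list_join h l) (bigsup L h).
Proof.
  induction l as [|y l IH]; simpl; [apply zero_least|].
  apply join_least; [apply (bigsup_ub _ _ y), le_refl | exact IH].
Qed.

Lemma biginf_list_join_decreasing {X} (f : nat -> X -> L) (l : list X) :
  join_meet_distributive L ->
  (forall n x, le (f (S n) x) (f n x)) ->
  le (biginf L (fun n => list_join (f n) l))
     (list_join (fun x => biginf L (fun n => f n x)) l).
Proof.
  intros Hdistr Hf. induction l as [|x l IH]; simpl.
  - apply (biginf_lb _ _ 0), le_refl.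
  - eapply le_trans; [apply (biginf_join_decreasing (fun n => f n x)
                                                 (fun n => list_join (f n) l)); auto|].
    + intro n. apply list_join_mono. auto.
    + apply join_mono; [apply le_refl | exact IH].
Qed.

Lemma biginf_mul_le (c : L) (g : nat -> L) :
  mul_continuous L ->
  le (biginf L (fun n => mul c (g n))) (mul c (biginf L g)).
Proof.
  intros Hcont. unfold biginf at 2.
  rewrite Hcont by (exists (g 0); exists 0; reflexivity).
  apply inf_greatest. intros z [v [[n ->] ->]]. apply (biginf_lb _ _ n), le_refl.
Qed.

Lemma rcomp_le_list_join {A B C} (p : frel L A B) (q : frel L B C) (a : A) (c : C)
    (l : list B) :
  (forall b, p a b <> zero -> In b l) ->
  le (rcomp L p q a c) (list_join (fun b => mul (p a b) (q b c)) l).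
Proof.
  intros Hl. apply bigsup_least. intro b.
  destruct (classic (p a b = zero)) as [Hz | Hz].
  - rewrite Hz. apply adjunction, zero_least.
  - apply (list_join_ub (fun b => mul (p a b) (q b c))), Hl, Hz.
Qed.

Lemma biginf_rcomp_decreasing {A B C} (p : frel L A B) (q : nat -> frel L B C)
    (a : A) (c : C) :
  join_meet_distributive L -> mul_continuous L ->
  (exists l : list B, forall b, p a b <> zero -> In b l) ->
  (forall n, rel_le L (q (S n)) (q n)) ->
  le (biginf L (fun n => rcomp L p (q n) a c)) (rcomp L p (rel_biginf L q) a c).
Proof.
  intros Hdistr Hcont [l Hl] Hq.
  set (f := fun n b => mul (p a b) (q n b c)).
  assert (Hfinite : le (biginf L (fun n => rcomp L p (q n) a c))
                       (biginf L (fun n => list_join (f n) l)))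
    by (apply biginf_mono; intro n; apply rcomp_le_list_join, Hl).
  assert (Hf : forall n b, le (f (S n) b) (f n b))
    by (intros n b; apply mul_mono; [apply le_refl | apply Hq]).
  eapply le_trans; [exact Hfinite|].
  eapply le_trans; [apply biginf_list_join_decreasing; assumption|].
  eapply le_trans; [|apply list_join_le_bigsup].
  apply list_join_mono. intro b. apply biginf_mul_le, Hcont.
Qed.

End Calculus.

Section Simulations.
Variables (L : CRL) (Sigma : Type).

Lemma simulation_const_db {M M' : fautomaton L Sigma} (psi : frel L (st M) (st M')) :
  fuzzy_simulation L M M' psi -> db_fuzzy_simulation L M M' (fun _ => psi).
Proof.
  intros [Htau Hdelta]. split; [intros n a b; apply le_refl | split; auto].
Qed.

Lemma id_rel_simulation (M : fautomaton L Sigma) :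
  fuzzy_simulation L M M (id_rel L).
Proof.
  split.
  - rewrite inv_id, compv_id. intro a. apply le_refl.
  - intros s. rewrite inv_id, rcomp_id_l, rcomp_id_r. intros a b. apply le_refl.
Qed.

Lemma db_simulation_rcomp {M M' M'' : fautomaton L Sigma}
    (Phi : nat -> frel L (st M) (st M')) (Psi : nat -> frel L (st M') (st M'')) :
  db_fuzzy_simulation L M M' Phi -> db_fuzzy_simulation L M' M'' Psi ->
  db_fuzzy_simulation L M M'' (fun n => rcomp L (Phi n) (Psi n)).
Proof.
  intros [Hdec1 [Htau1 Hdelta1]] [Hdec2 [Htau2 Hdelta2]]. split; [|split].
  - intro n. apply rcomp_mono; auto.
  - rewrite inv_rcomp. intro c. eapply le_trans; [apply compv_rcomp|].
    eapply le_trans; [|apply Htau2]. apply compv_mono; [intros x y; apply le_refl | exact Htau1].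
  - intros s n. rewrite !inv_rcomp, rcomp_assoc. intros c a.
    eapply le_trans; [apply rcomp_mono; [intros x y; apply le_refl | apply Hdelta1]|].
    rewrite <- rcomp_assoc.
    eapply le_trans; [apply rcomp_mono; [apply Hdelta2 | intros x y; apply le_refl]|].
    rewrite rcomp_assoc. apply le_refl.
Qed.

Lemma greatest_db_simulation_preorder (M : fautomaton L Sigma)
    (Phi : nat -> frel L (st M) (st M)) :
  greatest_db_fuzzy_simulation L M M Phi -> forall n, fuzzy_preorder L (Phi n).
Proof.
  intros [Hdb Hgreatest] n. split.
  - intro a. apply le_antisym; [apply one_greatest|].
    rewrite <- (id_rel_diag L a).
    apply (Hgreatest _ (simulation_const_db _ (id_rel_simulation M))).
  - apply (Hgreatest _ (db_simulation_rcomp Phi Phi Hdb Hdb)).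
Qed.

Lemma db_simulation_meet (M M' : fautomaton L Sigma)
    (Phi : nat -> frel L (st M) (st M')) :
  join_meet_distributive L -> mul_continuous L ->
  (forall (x : st M') (s : Sigma), exists l : list (st M'),
      forall y, delta M' x s y <> zero -> In y l) ->
  db_fuzzy_simulation L M M' Phi -> fuzzy_simulation L M M' (rel_biginf L Phi).
Proof.
  intros Hdistr Hcont Hfin [Hdec [Htau Hdelta]]. split.
  - intro b. eapply le_trans; [|apply Htau]. apply compv_mono.
    + intros u v. apply (biginf_lb L _ _ 0), le_refl.
    + intro a. apply le_refl.
  - intros s b y.
    assert (Hlevels : le (rcomp L (inv L (rel_biginf L Phi)) (deltas L M s) b y)
                         (biginf L (fun n => rcomp L (deltas L M' s) (inv L (Phi n)) b y))).
    { apply biginf_greatest. intro n. eapply le_trans; [|apply (Hdelta s n)].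
      apply rcomp_mono; [|intros u v; apply le_refl].
      intros u v. apply (biginf_lb L _ _ (S n)), le_refl. }
    eapply le_trans; [exact Hlevels|].
    apply (biginf_rcomp_decreasing L (deltas L M' s) (fun n => inv L (Phi n)));
      [assumption | assumption | apply Hfin |].
    intros n u v. apply Hdec.
Qed.

Lemma simulation_le_db_meet (M M' : fautomaton L Sigma)
    (Phi : nat -> frel L (st M) (st M')) (psi : frel L (st M) (st M')) :
  greatest_db_fuzzy_simulation L M M' Phi -> fuzzy_simulation L M M' psi ->
  rel_le L psi (rel_biginf L Phi).
Proof.
  intros [_ Hgreatest] Hpsi a b. apply biginf_greatest. intro n.
  apply (Hgreatest _ (simulation_const_db psi Hpsi)).
Qed.

(** Part (c): a reflexive relation has norm one, since
    [sigma a <= sigma a (x) phi(a,a) <= (sigma o phi^-1)(a)]. *)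
Lemma rel_norm_reflexive (M : fautomaton L Sigma) (phi : frel L (st M) (st M)) :
  (forall a, phi a a = one) -> rel_norm L M M phi = one.
Proof.
  intros Hrefl. apply le_antisym; [apply one_greatest|].
  apply biginf_greatest. intro a. apply adjunction. rewrite mul_comm, mul_one.
  apply (bigsup_ub L _ _ a). unfold inv. rewrite Hrefl, mul_one. apply le_refl.
Qed.

End Simulations.

Theorem mainTheorem5 (L : CRL) (Sigma : Type) (M : fautomaton L Sigma)
    (Phi : nat -> frel L (st M) (st M)) :
  greatest_db_fuzzy_simulation L M M Phi ->
  join_meet_distributive L ->
  mul_continuous L ->
  image_finite L M ->
  greatest_fuzzy_simulation L M M (rel_biginf L Phi) /\
  (forall n, fuzzy_preorder L (Phi n)) /\
  db_norm L M M Phi = one.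
Proof.
  intros Hgreatest Hdistr Hcont [Hfin _].
  pose proof (greatest_db_simulation_preorder L Sigma M Phi Hgreatest) as Hpreorder.
  split; [split | split].
  - apply db_simulation_meet; auto. apply Hgreatest.
  - intros psi Hpsi. apply (simulation_le_db_meet L Sigma M M Phi psi Hgreatest Hpsi).
  - exact Hpreorder.
  - apply le_antisym; [apply one_greatest|]. apply biginf_greatest. intro n.
    rewrite (rel_norm_reflexive L Sigma M (Phi n) (proj1 (Hpreorder n))).
    apply le_refl.
Qed.
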